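(* Let $\tau:SU(2)\to U(H)$ be a strongly continuous unitary representation on a finite-dimensional Hilbert space $H$, and let $E_m=E_m(\tau,H)$ and $\iota_{k,m}$ be as in the context. Then $(E,\iota)$ is an $SU(2)$-subproduct system (of Hilbert spaces, i.e. over $B=\mathbb{C}$): for all $k,m$, $\iota_{k,m}$ maps $E_{k+m}$ into $E_k\otimes E_m$, and the maps $\iota_{k,m}$ are $SU(2)$-equivariant isometries satisfying the subproduct system axioms.
   Context: $\det(\tau,H)=\{\xi\in H\otimes H:(\tau(g)\otimes\tau(g))\xi=\xi\ \forall g\in SU(2)\}$. For $m\ge2$ let $K_m=\sum_{i=1}^{m-1}H^{\otimes(i-1)}\otimes\det(\tau,H)\otimes H^{\otimes(m-i-1)}\subseteq H^{\otimes m}$ and $E_m=K_m^\perp$; $E_1=H$, $E_0=\mathbb{C}$. $SU(2)$ acts on $E_m$ by the restriction of $\tau^{\otimes m}$ (which leaves $E_m$ invariant), on $E_1$ by $\tau$ and trivially on $E_0$. $\iota_{k,m}:E_{k+m}\to E_k\otimes E_m$ is induced by the canonical identification $H^{\otimes(k+m)}\cong H^{\otimes k}\otimes H^{\otimes m}$ (with $E_0\otimes E_m=E_m=E_m\otimes E_0$). A subproduct system of Hilbert spaces is a sequence $\{E_m\}_{m\in\mathbb{N}_0}$ of Hilbert spaces with $E_0=\mathbb{C}$ and isometries $\iota_{k,m}:E_{k+m}\to E_k\otimes E_m$ such that $\iota_{0,m},\iota_{m,0}$ are the canonical identifications and $(1_{E_k}\otimes\iota_{l,m})\iota_{k,l+m}=(\iota_{k,l}\otimes1_{E_m})\iota_{k+l,m}$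 for all $k,l,m$; it is an $SU(2)$-subproduct system if each $E_m$ carries a strongly continuous unitary $SU(2)$-representation (trivial on $E_0$) and all $\iota_{k,m}$ are equivariant for the diagonal actions. *)

From HB Require Import structures.
From mathcomp Require Import all_boot all_order all_algebra.
From mathcomp Require Import reals.
From mathcomp Require Import complex.

Set Implicit Arguments.
Unset Strict Implicit.
Unset Printing Implicit Defensive.

Import Order.TTheory GRing.Theory Num.Theory.
Local Open Scope ring_scope.

Section Defs.
Variable R : realType.
Local Notation C := R[i].

Definition adjmx (m n : nat) (A : 'M[C]_(m, n)) : 'M[C]_(n, m) :=
  \matrix_(i, j) (A j i)^*.

Definition SU2 (g : 'M[C]_2) : Prop :=
  g *m adjmx g = 1%:M /\ \det g = 1.

Definition mx_close (m n : nat) (A B : 'M[C]_(m, n)) (e : C) : Prop :=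
  forall i j, `|A i j - B i j| < e.

(* H = C^d with its standard inner product; a unitary representation of
   SU(2) on H is a map tau : 'M_2 -> 'M_d which on SU(2) takes unitary values
   and is multiplicative.  Strong continuity on a finite dimensional space is
   continuity of the matrix entries, i.e. of g |-> tau g v for every v. *)
Definition unitary_rep (d : nat) (tau : 'M[C]_2 -> 'M[C]_d) : Prop :=
  (forall g, SU2 g -> tau g *m adjmx (tau g) = 1%:M) /\
  (forall g h, SU2 g -> SU2 h -> tau (g *m h) = tau g *m tau h).

Definition strongly_continuous (d : nat) (tau : 'M[C]_2 -> 'M[C]_d) : Prop :=
  forall (v : 'cV[C]_d) g, SU2 g -> forall e : C, 0 < e ->
    exists2 delta : C, 0 < delta &
      forall h, SU2 h -> mx_close h g delta ->
        mx_close (tau h *m v) (tau g *m v) e.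

(* A vector of the Hilbert space with orthonormal basis indexed by the finite
   type X is a function X -> C. *)
Definition vec (X : finType) := {ffun X -> C}.

Definition dotv (X : finType) (x y : vec X) : C := \sum_t x t * (y t)^*.

(* linear span (finite-dimensional, hence automatically closed) *)
Definition in_span (X : finType) (P : vec X -> Prop) (x : vec X) : Prop :=
  exists n (c : 'I_n -> C) (v : 'I_n -> vec X),
    (forall i, P (v i)) /\ x = \sum_(i < n) c i *: v i.

Definition orthc (X : finType) (P : vec X -> Prop) (x : vec X) : Prop :=
  forall y, P y -> dotv y x = 0.

(* H (x) H' with H = C^X, H' = C^Y is C^(X * Y); elementary tensors *)
Definition tens (X Y : finType) (u : vec X) (w : vec Y) : vec (X * Y)%type :=
  [ffun p => u p.1 * w p.2].

Definition tensS (X Y : finType) (P : vec X -> Prop) (Q : vec Y -> Prop)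
  : vec (X * Y)%type -> Prop :=
  in_span (fun z => exists u w, [/\ P u, Q w & z = tens u w]).

(* 1 (x) f and f (x) 1 for (linear) f *)
Definition idt (X Y Z : finType) (f : vec Y -> vec Z) (z : vec (X * Y)%type)
  : vec (X * Z)%type := [ffun p => f [ffun y => z (p.1, y)] p.2].
Definition tid (X Y Z : finType) (f : vec X -> vec Z) (z : vec (X * Y)%type)
  : vec (Z * Y)%type := [ffun p => f [ffun x => z (x, p.2)] p.1].
Definition tensop (X Y : finType) (A : vec X -> vec X) (B : vec Y -> vec Y)
  (z : vec (X * Y)%type) : vec (X * Y)%type := tid A (idt B z).

Definition Hpow (d m : nat) := vec (m.-tuple 'I_d).

Definition tpow (d m : nat) (tau : 'M[C]_2 -> 'M[C]_d) (g : 'M[C]_2)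
  (x : Hpow d m) : Hpow d m :=
  [ffun t : m.-tuple 'I_d =>
     \sum_(s : m.-tuple 'I_d)
        (\prod_(i < m) tau g (tnth t i) (tnth s i)) * x s].

Definition detsp (d : nat) (tau : 'M[C]_2 -> 'M[C]_d) (xi : vec ('I_d * 'I_d)%type)
  : Prop :=
  forall g, SU2 g -> tensop (fun v => [ffun a => \sum_b tau g a b * v b])
                           (fun v => [ffun a => \sum_b tau g a b * v b]) xi = xi.

Lemma pos1_proof m (j : 'I_m.-1) : (j < m)%N.
Proof. by case: j => j /= Hj; case: m Hj => //= m Hj; apply: ltnW. Qed.
Lemma pos2_proof m (j : 'I_m.-1) : (j.+1 < m)%N.
Proof. by case: j => j /= Hj; case: m Hj. Qed.
Definition pos1 m (j : 'I_m.-1) : 'I_m := Ordinal (pos1_proof j).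
Definition pos2 m (j : 'I_m.-1) : 'I_m := Ordinal (pos2_proof j).

(* H^{(x)(i-1)} (x) det(tau,H) (x) H^{(x)(m-i-1)}, i = j+1, j : 'I_(m-1),
   via the canonical identification: spanned by the elementary tensors
   a (x) xi (x) b, a in H^{(x) j}, xi in det(tau,H), b in H^{(x)(m-j-2)}. *)
Definition Kslot (d m : nat) (tau : 'M[C]_2 -> 'M[C]_d) (j : 'I_m.-1)
  : Hpow d m -> Prop :=
  in_span (fun y => exists (a b : seq 'I_d -> C) xi, detsp tau xi /\
     y = [ffun t : m.-tuple 'I_d =>
            a (take j t) * xi (tnth t (pos1 j), tnth t (pos2 j))
              * b (drop j.+2 t)]).

(* K_m = sum over the slots; E_m = K_m^perp (K_0 = K_1 = 0, so
   E_0 = H^{(x)0} = C and E_1 = H^{(x)1} = H) *)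
Definition Ksp (d m : nat) (tau : 'M[C]_2 -> 'M[C]_d) : Hpow d m -> Prop :=
  in_span (fun y => exists j : 'I_m.-1, Kslot tau j y).
Definition Esp (d m : nat) (tau : 'M[C]_2 -> 'M[C]_d) : Hpow d m -> Prop :=
  orthc (Ksp tau).

Definition iotaE (d k m : nat) (x : Hpow d (k + m))
  : vec (k.-tuple 'I_d * m.-tuple 'I_d)%type :=
  [ffun p => x (cat_tuple p.1 p.2)].

Definition castA (d k l m : nat) (x : Hpow d (k + (l + m))) : Hpow d (k + l + m) :=
  [ffun t => x (tcast (esym (addnA k l m)) t)].

End Defs.
Arguments Esp {R d} m tau.
Arguments Ksp {R d} m tau.
Arguments iotaE {R d} k m x.

(* E_m is the orthogonal complement of K_m, the span of the tensors a (x) xi (x) b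
   with xi in det(tau,H) occupying two adjacent factors.  As xi is invariant under
   tau (x) tau, tau^{(x)m}(g) maps such a tensor to (tau(g)a) (x) xi (x) (tau(g)b),
   so K_m is invariant, and by unitarity so is E_m.  Under H^{(x)(k+m)} =
   H^{(x)k} (x) H^{(x)m} both K_k (x) H^{(x)m} and H^{(x)k} (x) K_m lie in K_{k+m}.
   Splitting H^{(x)k} = K_k (+) E_k and H^{(x)m} = K_m (+) E_m orthogonally (the
   spaces are finite dimensional), a vector orthogonal to K_{k+m} therefore has no
   component outside E_k (x) E_m.  The other axioms are identities about
   concatenating index tuples, and strong continuity holds because the matrix
   entries of tau^{(x)m}(g) are polynomials in those of tau(g). *)

From HB Require Import structures.
From mathcomp Require Import all_boot all_order all_algebra.
From mathcomp Require Import reals.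
From mathcomp Require Import complex.
From mathcomp Require Import zify ring.
From Stdlib Require Import Classical FunctionalExtensionality.
Import Order.TTheory GRing.Theory Num.Theory.
Local Open Scope ring_scope.

Set Implicit Arguments.
Unset Strict Implicit.
Unset Printing Implicit Defensive.

Section InnerProduct.
Variables (R : realType) (X : finType).
Local Notation C := R[i].
Local Notation V := (vec R X).
Implicit Types (x y z : V) (c : C) (P : V -> Prop).

Lemma dotvDl x y z : dotv (x + y) z = dotv x z + dotv y z.
Proof. by rewrite /dotv -big_split; apply: eq_bigr => t _; rewrite ffunE mulrDl. Qed.

Lemma dotvZl c x z : dotv (c *: x) z = c * dotv x z.
Proof. by rewrite /dotv mulr_sumr; apply: eq_bigr => t _; rewrite ffunE mulrA. Qed.

Lemma dotvC x y : dotv y x = (dotv x y)^*.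
Proof.
by rewrite /dotv rmorph_sum; apply: eq_bigr => t _; rewrite rmorphM /= conjCK mulrC.
Qed.

Lemma dotvZr c x z : dotv z (c *: x) = c^* * dotv z x.
Proof. by rewrite dotvC dotvZl rmorphM /= -!dotvC. Qed.

Lemma dotv0l z : dotv 0 z = 0.
Proof. by rewrite -(scale0r 0) dotvZl mul0r. Qed.

Lemma dotvBr x y z : dotv z (x - y) = dotv z x - dotv z y.
Proof.
by rewrite dotvC -scaleN1r dotvDl dotvZl rmorphD rmorphM /= -!dotvC conjCN1 mulN1r.
Qed.

Lemma dotvv_eq0 x : dotv x x = 0 -> x = 0.
Proof.
move=> xx0; apply/ffunP => t; rewrite ffunE; apply/eqP; rewrite -mul_conjC_eq0.
by apply/eqP; apply: (psumr_eq0P (fun s _ => mul_conjC_ge0 (x s)) xx0).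
Qed.

Lemma span_gen P x : P x -> in_span P x.
Proof.
by move=> Px; exists 1%N, (fun=> 1), (fun=> x); split; rewrite // big_ord1 scale1r.
Qed.

Lemma span0 P : in_span P 0.
Proof. by exists 0%N, (fun=> 0), (fun=> 0); split => [[]|]; rewrite ?big_ord0. Qed.

Lemma span_lin P c x y : in_span P x -> in_span P y -> in_span P (c *: x + y).
Proof.
move=> [n [a [v [Pv ->]]]] [n' [a' [v' [Pv' ->]]]].
pose sel T (f : 'I_n -> T) (f' : 'I_n' -> T) i :=
  match split i with inl i => f i | inr j => f' j end.
exists (n + n')%N, (sel _ (fun i => c * a i) a'), (sel _ v v'); split.
  by move=> i; rewrite /sel; case: (split i).
rewrite big_split_ord scaler_sumr /sel; congr (_ + _); apply: eq_bigr => i _.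
  by rewrite (unsplitK (inl i : 'I_n + 'I_n')) scalerA.
by rewrite (unsplitK (inr i : 'I_n + 'I_n')).
Qed.

Lemma spanZ P c x : in_span P x -> in_span P (c *: x).
Proof. by move=> Px; rewrite -[_ *: x]addr0; apply: span_lin => //; apply: span0. Qed.

Lemma span_ind P (Q : V -> Prop) :
  Q 0 -> (forall c x y, Q x -> Q y -> Q (c *: x + y)) -> (forall x, P x -> Q x) ->
  forall x, in_span P x -> Q x.
Proof.
move=> Q0 Qlin QP _ [n [a [v [Pv ->]]]].
by elim/big_rec: _ => // i y _ Qy; apply: Qlin (QP _ (Pv i)) Qy.
Qed.

Lemma span_mono P (Q : V -> Prop) x : (forall y, P y -> Q y) -> in_span P x -> in_span Q x.
Proof.
move=> PQ; apply: span_ind => [|c u w|y /PQ]; [exact: span0 | exact: span_lin |].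
exact: span_gen.
Qed.

Lemma orthc_span P z : orthc P z -> orthc (in_span P) z.
Proof.
move=> Pz; apply: span_ind => [|c x y x0 y0|//]; first exact: dotv0l.
by rewrite dotvDl dotvZl x0 y0 mulr0 addr0.
Qed.

Lemma span_orthc_eq0 P z : in_span P z -> orthc P z -> z = 0.
Proof. by move=> Pz /orthc_span /(_ z Pz) /dotvv_eq0. Qed.

End InnerProduct.

Lemma span_linear_image (R : realType) (X Y : finType) (P : vec R X -> Prop)
    (Q : vec R Y -> Prop) (f : vec R X -> vec R Y) :
  (forall c x y, f (c *: x + y) = c *: f x + f y) ->
  (forall x, P x -> in_span Q (f x)) -> forall x, in_span P x -> in_span Q (f x).
Proof.
move=> f_lin fP; apply: span_ind => [|c x y Qx Qy|//].
  by have := f_lin (-1) 0 0; rewrite scaler0 addr0 scaleN1r addNr => ->; apply: span0.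
by rewrite f_lin; apply: span_lin.
Qed.

Section OrthogonalDecomposition.
Variables (R : realType) (X : finType).
Local Notation C := R[i].
Local Notation V := (vec R X).
Local Notation N := #|X|.

Lemma orth_decomp_family n (v : 'I_n -> V) x :
  exists p q, [/\ in_span (fun z => exists i, z = v i) p,
                  orthc (fun z => exists i, z = v i) q & x = p + q].
Proof.
elim: n v x => [|n IHn] v x.
  by exists 0, x; split; [exact: span0 | move=> y [[]] | rewrite add0r].
pose v' i := v (lift ord0 i).
have span_v' y : in_span (fun z => exists i, z = v' i) y ->
    in_span (fun z => exists i, z = v i) y.
  by apply: span_mono => _ [i ->]; exists (lift ord0 i).
have [pa [w [pa_v' w_v' def_v0]]] := IHn v' (v ord0).
have [p [q [p_v' q_v' ->]]] := IHn v' x.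
(* Gram-Schmidt: w is the part of v ord0 orthogonal to the other vectors. *)
pose c := dotv q w / dotv w w.
have q'_v' : orthc (fun z => exists i, z = v' i) (q - c *: w).
  by move=> _ [i ->]; rewrite dotvBr dotvZr q_v' ?w_v' ?mulr0 ?subrr //; exists i.
exists (p + c *: w), (q - c *: w); split.
- rewrite addrC; apply: span_lin; last exact: span_v'.
  have -> : w = 1 *: v ord0 + (-1) *: pa.
    by rewrite scale1r scaleN1r def_v0 addrAC subrr add0r.
  by apply: span_lin; [apply: span_gen; exists ord0 | apply/spanZ/span_v'].
- move=> _ [i ->]; case: (unliftP ord0 i) => [j ->|->]; first by apply: q'_v'; exists j.
  rewrite def_v0 dotvDl (orthc_span q'_v') // add0r.
  have [->|w_neq0] := eqVneq w 0; first by rewrite dotv0l.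
  have ww_neq0 : dotv w w != 0 by apply: contra_neq w_neq0 => /dotvv_eq0.
  rewrite dotvBr dotvZr /c rmorphM fmorphV /= -!dotvC.
  by rewrite mulrAC mulfK // subrr.
- by rewrite addrACA subrr addr0.
Qed.

Definition vec_row (x : V) : 'rV[C]_N := \row_i x (enum_val i).
Definition row_vec (r : 'rV[C]_N) : V := [ffun t => r 0 (enum_rank t)].

Lemma vec_rowK : cancel vec_row row_vec.
Proof. by move=> x; apply/ffunP => t; rewrite ffunE mxE enum_rankK. Qed.

Lemma submx_span n (A : 'M[C]_(n, N)) y :
  (vec_row y <= A)%MS -> in_span (fun z => exists i, z = row_vec (row i A)) y.
Proof.
move=> /submxP [D defy].
exists n, (fun i => D 0 i), (fun i => row_vec (row i A)); split => [i|]; first by exists i.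
apply/ffunP => t; rewrite -[y]vec_rowK defy mulmx_sum_row ffunE summxE sum_ffunE.
by apply: eq_bigr => i _; rewrite !ffunE !mxE.
Qed.

Lemma span_fin_gen (P : V -> Prop) : exists n (v : 'I_n -> V),
  (forall i, P (v i)) /\ forall y, P y -> in_span (fun z => exists i, z = v i) y.
Proof.
(* Otherwise P contains families of every rank, which is absurd beyond #|X|. *)
apply: NNPP => no_gen.
have grow r : exists n (A : 'M[C]_(n, N)),
    (forall i, P (row_vec (row i A))) /\ (r <= \rank A)%N.
  elim: r => [|r [n [A [PA le_rA]]]]; first by exists 0%N, 0; split => // [[]].
  have [y [Py yA]] : exists y, P y /\ ~~ (vec_row y <= A)%MS.
    apply: NNPP => all_in; apply: no_gen.
    exists n, (fun i => row_vec (row i A)); split => // y Py.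
    have [/submx_span //|yA] := boolP (vec_row y <= A)%MS.
    by case: all_in; exists y.
  exists (n + 1)%N, (col_mx A (vec_row y)); split.
    move=> i; rewrite -(splitK i); case: (split i) => j; first by rewrite rowKu.
    by rewrite rowKd row_id vec_rowK.
  have : (A < col_mx A (vec_row y))%MS.
    by rewrite ltmxE -addsmxE addsmxSl /= col_mx_sub submx_refl.
  by rewrite ltmxErank => /andP [_]; apply: leq_trans.
have [n [A [_]]] := grow N.+1.
by rewrite ltnNge rank_leq_col.
Qed.

Lemma orth_decomp (P : V -> Prop) x :
  exists p q, [/\ in_span P p, orthc (in_span P) q & x = p + q].
Proof.
have [n [v [Pv Pspan]]] := span_fin_gen P.
have [p [q [p_v q_v ->]]] := orth_decomp_family v x.
exists p, q; split => //; first by apply: span_mono p_v => _ [i ->].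
by apply: orthc_span => y /Pspan /orthc_span; apply.
Qed.

End OrthogonalDecomposition.

Section TensorDecomposition.
Variables (R : realType) (X Y : finType).
Implicit Types (P : vec R X -> Prop) (Q : vec R Y -> Prop).

Definition tens_either P Q (w : vec R (X * Y)%type) : Prop :=
  (exists p e, P p /\ w = tens p e) \/ (exists f q, Q q /\ w = tens f q).

Definition basisv (T : finType) (a : T) : vec R T := [ffun t => (t == a)%:R].

Lemma dotv_tens (u p : vec R X) (v e : vec R Y) :
  dotv (tens u v) (tens p e) = dotv u p * dotv v e.
Proof.
rewrite /dotv mulr_suml; under [RHS]eq_bigr do rewrite mulr_sumr.
by rewrite pair_big /=; apply: eq_bigr => -[a b] _; rewrite !ffunE rmorphM /=; ring.
Qed.

Lemma vec_expand (z : vec R (X * Y)%type) :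
  z = \sum_(p : X * Y) z p *: tens (basisv p.1) (basisv p.2).
Proof.
apply/ffunP => -[a b]; rewrite sum_ffunE (bigD1 (a, b)) //= big1 => [|[a' b'] ab'].
  by rewrite !ffunE !eqxx /= addr0 mulr1; symmetry; exact: mulr1.
by rewrite /= !ffunE -natrM mulnb -xpair_eqE eq_sym (negbTE ab') scaler0.
Qed.

Lemma tens_orth_decomp P Q z : exists z1 z2,
  [/\ tensS (orthc (in_span P)) (orthc (in_span Q)) z1,
      in_span (tens_either (in_span P) (in_span Q)) z2 & z = z1 + z2].
Proof.
rewrite [z]vec_expand; elim/big_rec: _ => [|[a b] _ _ [z1 [z2 [z1E z2K ->]]]].
  by exists 0, 0; split; [exact: span0 | exact: span0 | rewrite addr0].
have [pa [qa [Ppa Pqa ->]]] := orth_decomp P (basisv a).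
have [pb [qb [Qpb Qqb ->]]] := orth_decomp Q (basisv b).
have -> : tens (pa + qa) (pb + qb) = tens qa qb + (tens pa (pb + qb) + tens qa pb).
  by apply/ffunP => t; rewrite !ffunE; ring.
set c := z (a, b).
exists (c *: tens qa qb + z1), (c *: (tens pa (pb + qb) + tens qa pb) + z2); split.
- by apply: span_lin => //; apply: span_gen; exists qa, qb.
- apply: span_lin => //; rewrite -[tens pa _]scale1r.
  by apply: span_lin; apply: span_gen; [left; exists pa, (pb + qb) | right; exists qa, pb].
- by rewrite scalerDr addrACA.
Qed.

Lemma orthc_tens_either P Q z :
  tensS (orthc (in_span P)) (orthc (in_span Q)) z ->
  orthc (tens_either (in_span P) (in_span Q)) z.
Proof.
move=> zE w w_either; rewrite dotvC; apply/eqP; rewrite conjC_eq0; apply/eqP.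
move: z zE; apply: span_ind => [|c x y x0 y0|_ [u [v [Pu Qv ->]]]].
- exact: dotv0l.
- by rewrite dotvDl dotvZl x0 y0 mulr0 addr0.
case: w_either => [[p [e [Pp ->]]] | [f [q [Qq ->]]]]; rewrite dotv_tens.
  by rewrite dotvC Pu // conjC0 mul0r.
by rewrite [dotv v q]dotvC Qv // conjC0 mulr0.
Qed.

End TensorDecomposition.

Section Tuples.
Variable T : finType.

Lemma cat_tuple_bij k m :
  bijective (fun p : k.-tuple T * m.-tuple T => cat_tuple p.1 p.2).
Proof.
apply: inj_card_bij; last by rewrite card_prod !card_tuple expnD.
move=> [a b] [a' b'] /(congr1 val) /= /eqP; rewrite eqseq_cat ?size_tuple //.
by case/andP => /eqP/val_inj -> /eqP/val_inj ->.
Qed.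

Lemma cat_tuple_surj k m (t : (k + m).-tuple T) :
  exists t1 t2, t = cat_tuple t1 t2.
Proof. by have [f _ fK] := cat_tuple_bij k m; exists (f t).1, (f t).2; rewrite fK. Qed.

Lemma big_cat_tuple (V : nmodType) k m (F : (k + m).-tuple T -> V) :
  \sum_s F s = \sum_(s1 : k.-tuple T) \sum_(s2 : m.-tuple T) F (cat_tuple s1 s2).
Proof. by rewrite pair_big (reindex _ (onW_bij _ (cat_tuple_bij k m))). Qed.

Lemma big_tuple2 (V : nmodType) (F : 2.-tuple T -> V) :
  \sum_s F s = \sum_a \sum_b F [tuple a; b].
Proof.
rewrite pair_big (reindex (fun p => [tuple p.1; p.2])) //=; apply: onW_bij.
exists (fun s => (tnth s ord0, tnth s ord_max)) => [[a b] //|].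
by case=> [[|a [|b []]]] // s2; apply: val_inj.
Qed.

Lemma big_prod_tuple (S : comPzSemiRingType) n (F : 'I_n -> T -> S) :
  \sum_(s : n.-tuple T) \prod_i F i (tnth s i) = \prod_i \sum_a F i a.
Proof.
rewrite bigA_distr_bigA (reindex (fun f : {ffun 'I_n -> T} => [tuple f i | i < n])) /=.
  by apply: eq_bigr => f _; apply: eq_bigr => i _; rewrite tnth_mktuple.
apply: onW_bij; exists (fun t => [ffun i => tnth t i]) => [f|t].
  by apply/ffunP => i; rewrite ffunE tnth_mktuple.
by apply: eq_from_tnth => i; rewrite tnth_mktuple ffunE.
Qed.

End Tuples.

Section SeqFunctions.
Variables (R : realType) (d : nat).
Local Notation C := R[i].
Local Notation Hpow := (Hpow R d).
Implicit Types (F G H : seq 'I_d -> C).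

(* A vector of H^{(x)n} is also read as a function on all index words, vanishing
   off length n, so that tensor identities between powers of propositionally equal
   lengths need no casts.  [tensv m x y] is x (x) y read in H^{(x)m}; it is only
   meaningful when m = k + n. *)
Definition seqf n (x : Hpow n) (s : seq 'I_d) : C :=
  if insub s is Some u then x u else 0.

Definition tupv n F : Hpow n := [ffun t : n.-tuple 'I_d => F t].

Definition stens n F G (s : seq 'I_d) : C := F (take n s) * G (drop n s).

Definition tensv m k n (x : Hpow k) (y : Hpow n) : Hpow m :=
  tupv m (stens k (seqf x) (seqf y)).

Definition pairf (xi : vec R ('I_d * 'I_d)%type) (s : seq 'I_d) : C :=
  if s is [:: p; q] then xi (p, q) else 0.

Lemma seqf_tuple n (x : Hpow n) (u : n.-tuple 'I_d) : seqf x u = x u.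
Proof. by rewrite /seqf valK. Qed.

Lemma seqfK n (x : Hpow n) : tupv n (seqf x) = x.
Proof. by apply/ffunP => t; rewrite ffunE seqf_tuple. Qed.

Lemma seqf_tupv n F s : size s = n -> seqf (tupv n F) s = F s.
Proof. by move=> /eqP sz_s; rewrite -[s]/(val (Tuple sz_s)) seqf_tuple ffunE. Qed.

Lemma seqf_lin n c (x y : Hpow n) s : seqf (c *: x + y) s = c * seqf x s + seqf y s.
Proof. by rewrite /seqf; case: insub => [u|]; rewrite ?ffunE ?mulr0 ?addr0. Qed.

Lemma stensA i n k F G H :
  k = (i + n)%N -> stens k (stens i F G) H = stens i F (stens n G H).
Proof.
move=> ->; apply: functional_extensionality => s.
by rewrite /stens -take_min (minn_idPl (leq_addr n i)) take_drop drop_drop addnC mulrA.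
Qed.

Lemma tensv_cat k n (x : Hpow k) (y : Hpow n) t1 t2 :
  tensv (k + n) x y (cat_tuple t1 t2) = x t1 * y t2.
Proof.
rewrite ffunE /stens /= take_size_cat ?drop_size_cat ?size_tuple //.
by rewrite !seqf_tuple.
Qed.

Lemma tensv_tupv m k n F G :
  m = (k + n)%N -> tensv m (tupv k F) (tupv n G) = tupv m (stens k F G).
Proof.
move=> e; apply/ffunP => t; rewrite !ffunE /stens !seqf_tupv //.
  by rewrite size_drop size_tuple e addKn.
by rewrite size_takel // size_tuple e leq_addr.
Qed.

Lemma tensv_linl m k n c (x x' : Hpow k) (y : Hpow n) :
  tensv m (c *: x + x') y = c *: tensv m x y + tensv m x' y.
Proof. by apply/ffunP => t; rewrite !ffunE /stens seqf_lin mulrDl -mulrA. Qed.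

Lemma tensv_linr m k n c (x : Hpow k) (y y' : Hpow n) :
  tensv m x (c *: y + y') = c *: tensv m x y + tensv m x y'.
Proof. by apply/ffunP => t; rewrite !ffunE /stens seqf_lin mulrDr mulrCA. Qed.

Lemma iotaE_tensv k m (x : Hpow k) (y : Hpow m) :
  iotaE k m (tensv (k + m) x y) = tens x y.
Proof. by apply/ffunP => -[t1 t2]; rewrite ffunE tensv_cat ffunE. Qed.

Lemma slot_vecE m (j : 'I_m.-1) F (xi : vec R ('I_d * 'I_d)%type) G :
  [ffun t : m.-tuple 'I_d =>
     F (take j t) * xi (tnth t (pos1 j), tnth t (pos2 j)) * G (drop j.+2 t)] =
  tupv m (stens j F (stens 2 (pairf xi) G)).
Proof.
apply/ffunP => t; rewrite !ffunE /stens mulrA.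
have -> : drop j t = tnth t (pos1 j) :: tnth t (pos2 j) :: drop j.+2 t.
  have x0 : 'I_d := tnth t (pos1 j).
  rewrite !(tnth_nth x0) /= -drop_nth; last by rewrite size_tuple pos2_proof.
  by rewrite -drop_nth // size_tuple pos1_proof.
by rewrite /= take0 drop0.
Qed.

End SeqFunctions.

Section TensorPower.
Variables (R : realType) (d : nat) (tau : 'M[R[i]]_2 -> 'M[R[i]]_d).
Local Notation C := R[i].
Local Notation Hpow := (Hpow R d).

Definition tpow_coef n g (t s : n.-tuple 'I_d) : C :=
  \prod_(i < n) tau g (tnth t i) (tnth s i).

Lemma tpowE n g (x : Hpow n) t : tpow tau g x t = \sum_s tpow_coef g t s * x s.
Proof. by rewrite ffunE. Qed.

Lemma tpow_lin n g c (x y : Hpow n) :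
  tpow tau g (c *: x + y) = c *: tpow tau g x + tpow tau g y.
Proof.
apply/ffunP => t; rewrite !ffunE scaler_sumr -big_split /=.
by apply: eq_bigr => s _; rewrite !ffunE mulrDr mulrCA.
Qed.

Lemma tpow0 g (x : Hpow 0) : tpow tau g x = x.
Proof.
apply/ffunP => t; rewrite tpowE (big_pred1 t) => [|s].
  by rewrite /tpow_coef big_ord0 mul1r.
by rewrite /= [s]tuple0 [t]tuple0 eqxx.
Qed.

Lemma tpow_coef_cat k m g (t1 s1 : k.-tuple 'I_d) (t2 s2 : m.-tuple 'I_d) :
  tpow_coef g (cat_tuple t1 t2) (cat_tuple s1 s2) = tpow_coef g t1 s1 * tpow_coef g t2 s2.
Proof.
rewrite /tpow_coef big_split_ord; congr (_ * _); apply: eq_bigr => i _.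
  by rewrite !tnth_lshift.
by rewrite !tnth_rshift.
Qed.

Lemma tpow_coef_mul n g h (t u : n.-tuple 'I_d) :
  tau (g *m h) = tau g *m tau h ->
  \sum_s tpow_coef g t s * tpow_coef h s u = tpow_coef (g *m h) t u.
Proof.
move=> tau_gh; under eq_bigr do rewrite -big_split /=.
rewrite (big_prod_tuple (fun i a => tau g (tnth t i) a * tau h a (tnth u i))).
by rewrite /tpow_coef tau_gh; apply: eq_bigr => i _; rewrite mxE.
Qed.

Lemma tpow_coef1 n (t s : n.-tuple 'I_d) :
  tau 1%:M = 1%:M -> tpow_coef 1%:M t s = (t == s)%:R.
Proof.
move=> tau1; rewrite /tpow_coef tau1; have [<-|neq_ts] := eqVneq t s.
  by rewrite big1 // => i _; rewrite mxE eqxx.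
have /existsP [i neq_i] : [exists i, tnth t i != tnth s i].
  apply: contraNT neq_ts => /existsPn all_eq; apply/eqP/eq_from_tnth => i.
  exact/eqP/negPn/all_eq.
by rewrite (bigD1 i) //= mxE (negbTE neq_i) mul0r.
Qed.

Lemma tpow_tensv m k n g (x : Hpow k) (y : Hpow n) : m = (k + n)%N ->
  tpow tau g (tensv m x y) = tensv m (tpow tau g x) (tpow tau g y).
Proof.
move=> ->; apply/ffunP => t; have [t1 [t2 ->]] := cat_tuple_surj t.
rewrite tensv_cat !tpowE big_cat_tuple mulr_suml; apply: eq_bigr => s1 _.
rewrite mulr_sumr; apply: eq_bigr => s2 _.
by rewrite tensv_cat tpow_coef_cat mulrACA.
Qed.

Lemma tpow_pairf g (xi : vec R ('I_d * 'I_d)%type) :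
  let T := fun v => [ffun a => \sum_b tau g a b * v b] in
  tpow tau g (tupv 2 (pairf xi)) = tupv 2 (pairf (tensop T T xi)).
Proof.
apply/ffunP => t; rewrite !ffunE big_tuple2 /tensop /tid /idt.
have -> : t = [tuple tnth t ord0; tnth t ord_max].
  by case: t => [[|a [|b []]]] // s2; apply: val_inj.
rewrite /= !ffunE; apply: eq_bigr => a _; rewrite !ffunE mulr_sumr.
apply: eq_bigr => b _; rewrite !ffunE /tpow_coef !big_ord_recl big_ord0 /=.
by rewrite mulr1 mulrA.
Qed.

Lemma iotaE_tpow k m g (x : Hpow (k + m)) :
  iotaE k m (tpow tau g x) = tensop (tpow tau g) (tpow tau g) (iotaE k m x).
Proof.
apply/ffunP => -[t1 t2]; rewrite /tensop /tid /idt !ffunE big_cat_tuple.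
apply: eq_bigr => s1 _; rewrite !ffunE mulr_sumr; apply: eq_bigr => s2 _.
by rewrite !ffunE /= -/(tpow_coef _ _ _) tpow_coef_cat mulrA.
Qed.

End TensorPower.

Lemma adjmxK (R : realType) m n (A : 'M[R[i]]_(m, n)) : adjmx (adjmx A) = A.
Proof. by apply/matrixP => i j; rewrite !mxE conjCK. Qed.

Lemma SU2_1 (R : realType) : SU2 (1%:M : 'M[R[i]]_2).
Proof.
have adj1 : adjmx (1%:M : 'M[R[i]]_2) = 1%:M.
  by apply/matrixP => i j; rewrite !mxE eq_sym; case: eqP; rewrite ?conjC1 ?conjC0.
by split; rewrite ?adj1 ?mulmx1 ?det1.
Qed.

Lemma SU2_adj (R : realType) (g : 'M[R[i]]_2) :
  SU2 g -> SU2 (adjmx g) /\ adjmx g *m g = 1%:M.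
Proof.
move=> [unit_g det_g]; split; last exact: mulmx1C.
split; first by rewrite adjmxK; apply: mulmx1C.
have -> : adjmx g = map_mx Num.conj g^T by apply/matrixP => i j; rewrite !mxE.
by rewrite det_map_mx det_tr det_g rmorph1.
Qed.

Section UnitaryRepresentation.
Variables (R : realType) (d : nat) (tau : 'M[R[i]]_2 -> 'M[R[i]]_d).
Hypothesis tau_rep : unitary_rep tau.
Local Notation Hpow := (Hpow R d).

Lemma tau1 : tau 1%:M = 1%:M.
Proof.
have [unit_tau tauM] := tau_rep; have tau11 := unit_tau _ (SU2_1 R).
have idem : tau 1%:M = tau 1%:M *m tau 1%:M by rewrite -tauM ?mulmx1 //; apply: SU2_1.
by rewrite -{1}tau11 {2}idem -mulmxA tau11 mulmx1.
Qed.

Lemma tau_adj g : SU2 g -> tau (adjmx g) = adjmx (tau g).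
Proof.
move=> SU2g; have [SU2g' adjgK] := SU2_adj SU2g; have [unit_tau tauM] := tau_rep.
have inv : tau (adjmx g) *m tau g = 1%:M by rewrite -tauM // adjgK tau1.
by rewrite -[tau (adjmx g)]mulmx1 -(unit_tau g SU2g) mulmxA inv mul1mx.
Qed.

Lemma tpow_mul n g h (x : Hpow n) : SU2 g -> SU2 h ->
  tpow tau (g *m h) x = tpow tau g (tpow tau h x).
Proof.
move=> SU2g SU2h; apply/ffunP => t; rewrite !tpowE.
under eq_bigr do rewrite -(tpow_coef_mul _ _ (tau_rep.2 _ _ SU2g SU2h)) mulr_suml.
rewrite exchange_big /=; apply: eq_bigr => s _.
by rewrite tpowE mulr_sumr; apply: eq_bigr => u _; rewrite mulrA.
Qed.

Lemma tpow1 n (x : Hpow n) : tpow tau 1%:M x = x.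
Proof.
apply/ffunP => t; rewrite tpowE (bigD1 t) //= big1 => [|s neq_st].
  by rewrite tpow_coef1 ?tau1 // eqxx mul1r addr0.
by rewrite tpow_coef1 ?tau1 // eq_sym (negbTE neq_st) mul0r.
Qed.

Lemma tpow_adj n g (x y : Hpow n) : SU2 g ->
  dotv y (tpow tau g x) = dotv (tpow tau (adjmx g) y) x.
Proof.
move=> SU2g; rewrite /dotv.
under eq_bigr do rewrite tpowE rmorph_sum mulr_sumr.
under [RHS]eq_bigr do rewrite tpowE mulr_suml.
rewrite exchange_big /=; apply: eq_bigr => s _; apply: eq_bigr => t _.
rewrite rmorphM /= /tpow_coef rmorph_prod tau_adj //.
under [in RHS]eq_bigr do rewrite mxE.
by rewrite mulrCA mulrA.
Qed.

Lemma tpow_iso n g (x y : Hpow n) : SU2 g ->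
  dotv (tpow tau g x) (tpow tau g y) = dotv x y.
Proof.
move=> SU2g; have [SU2g' adjgK] := SU2_adj SU2g.
by rewrite tpow_adj // -tpow_mul // adjgK tpow1.
Qed.

End UnitaryRepresentation.

Section SlotSpaces.
Variables (R : realType) (d : nat) (tau : 'M[R[i]]_2 -> 'M[R[i]]_d).
Local Notation Hpow := (Hpow R d).

Lemma Ksp_linear_image m m' (f : Hpow m -> Hpow m') :
  (forall c x y, f (c *: x + y) = c *: f x + f y) ->
  (forall (j : 'I_m.-1) F G xi, detsp tau xi -> exists (j' : 'I_m'.-1) F' G',
     f (tupv m (stens j F (stens 2 (pairf xi) G))) =
     tupv m' (stens j' F' (stens 2 (pairf xi) G'))) ->
  forall x, Ksp m tau x -> Ksp m' tau (f x).
Proof.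
move=> f_lin f_slot; apply: span_linear_image => // y [j].
move: y; apply: span_linear_image => //.
move=> _ [F [G [xi [xi_det ->]]]]; rewrite slot_vecE.
have [j' [F' [G' ->]]] := f_slot j F G xi xi_det.
by rewrite -slot_vecE; apply/span_gen; exists j'; apply/span_gen; exists F', G', xi.
Qed.

Lemma Ksp_tpow m g (x : Hpow m) : SU2 g -> Ksp m tau x -> Ksp m tau (tpow tau g x).
Proof.
move=> SU2g; apply: Ksp_linear_image => [|j F G xi xi_det]; first exact: tpow_lin.
set r := (m - j.+2)%N; have def_m : m = (j + (2 + r))%N by have := ltn_ord j; lia.
exists j, (seqf (tpow tau g (tupv j F))), (seqf (tpow tau g (tupv r G))).
rewrite -!(tensv_tupv _ _ def_m) -!(tensv_tupv _ _ (erefl (2 + r)%N)) !seqfK.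
by rewrite (tpow_tensv _ _ _ _ def_m) tpow_tensv // tpow_pairf (xi_det g SU2g).
Qed.

Lemma Ksp_tensvl k m (p : Hpow k) (e : Hpow m) :
  Ksp k tau p -> Ksp (k + m) tau (tensv (k + m) p e).
Proof.
apply: (Ksp_linear_image (f := fun q => tensv (k + m) q e)) => [c x y|j F G xi _].
  exact: tensv_linl.
have lt_j : (j < (k + m).-1)%N by have := ltn_ord j; lia.
have def_k : k = (j + (k - j))%N by have := ltn_ord j; lia.
have def_kj : (k - j = 2 + (k - j.+2))%N by have := ltn_ord j; lia.
exists (Ordinal lt_j), F, (stens (k - j.+2) G (seqf e)).
by rewrite -[e]seqfK tensv_tupv // (stensA _ _ _ def_k) (stensA _ _ _ def_kj) seqfK.
Qed.

Lemma Ksp_tensvr k m (p : Hpow k) (e : Hpow m) :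
  Ksp m tau e -> Ksp (k + m) tau (tensv (k + m) p e).
Proof.
apply: (Ksp_linear_image (f := fun q => tensv (k + m) p q)) => [c x y|j F G xi _].
  exact: tensv_linr.
have lt_kj : (k + j < (k + m).-1)%N by have := ltn_ord j; lia.
exists (Ordinal lt_kj), (stens k (seqf p) F), G.
by rewrite -[p]seqfK tensv_tupv // seqfK -(stensA _ _ _ (erefl (k + j)%N)).
Qed.

Hypothesis tau_rep : unitary_rep tau.

Lemma Esp_tpow m g (x : Hpow m) : SU2 g -> Esp m tau x -> Esp m tau (tpow tau g x).
Proof.
move=> SU2g Ex y Ky; rewrite (tpow_adj tau_rep) //; apply: Ex.
by apply: Ksp_tpow Ky; apply: (SU2_adj SU2g).1.
Qed.

End SlotSpaces.

Section SubproductMaps.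
Variables (R : realType) (d : nat).
Local Notation Hpow := (Hpow R d).

Lemma iotaE_iso k m (x y : Hpow (k + m)) :
  dotv (iotaE k m x) (iotaE k m y) = dotv x y.
Proof.
by rewrite /dotv [RHS]big_cat_tuple pair_big; apply: eq_bigr => -[s1 s2] _; rewrite !ffunE.
Qed.

Lemma iotaE0m m (x : Hpow (0 + m)) t0 t : iotaE 0 m x (t0, t) = x t.
Proof. by rewrite ffunE; congr (x _); apply: val_inj; rewrite /= (tuple0 t0). Qed.

Lemma iotaEm0 m (x : Hpow (m + 0)) t t0 :
  iotaE m 0 x (t, t0) = x (tcast (esym (addn0 m)) t).
Proof.
by rewrite ffunE; congr (x _); apply: val_inj; rewrite /= val_tcast (tuple0 t0) cats0.
Qed.

Lemma iotaE_assoc k l m (x : Hpow (k + (l + m))) t1 t2 t3 :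
  idt (iotaE l m) (iotaE k (l + m) x) (t1, (t2, t3)) =
  tid (iotaE k l) (iotaE (k + l) m (castA x)) ((t1, t2), t3).
Proof. by rewrite !ffunE; congr (x _); apply: val_inj; rewrite /= val_tcast catA. Qed.

Variable tau : 'M[R[i]]_2 -> 'M[R[i]]_d.

Lemma iotaE_Esp k m (x : Hpow (k + m)) :
  Esp (k + m) tau x -> tensS (Esp k tau) (Esp m tau) (iotaE k m x).
Proof.
move=> Ex; have [z1 [z2 [z1E z2K def_z]]] :=
  tens_orth_decomp (fun y => exists j : 'I_k.-1, Kslot tau j y)
                   (fun y => exists j : 'I_m.-1, Kslot tau j y) (iotaE k m x).
suff z2_0 : z2 = 0 by rewrite def_z z2_0 addr0.
apply: span_orthc_eq0 z2K _ => w w_either.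
have -> : z2 = iotaE k m x - z1 by rewrite def_z addrAC subrr add0r.
rewrite dotvBr (orthc_tens_either z1E) // subr0.
case: w_either => [[p [e [Kp ->]]] | [f [q [Kq ->]]]].
  by rewrite -iotaE_tensv iotaE_iso; apply/Ex/Ksp_tensvl.
by rewrite -iotaE_tensv iotaE_iso; apply/Ex/Ksp_tensvr.
Qed.

End SubproductMaps.

Section Continuity.
Variables (R : realType) (g : 'M[R[i]]_2).
Local Notation C := R[i].
Implicit Types (P Q : 'M[C]_2 -> Prop) (f : 'M[C]_2 -> C).

Definition near_SU2 P : Prop :=
  exists2 delta : C, 0 < delta & forall h, SU2 h -> mx_close h g delta -> P h.

Lemma near_SU2_mono P Q : (forall h, P h -> Q h) -> near_SU2 P -> near_SU2 Q.
Proof. by move=> PQ [delta delta0 nearP]; exists delta => // h SU2h /(nearP h SU2h)/PQ. Qed.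

Lemma near_SU2_and P Q : near_SU2 P -> near_SU2 Q -> near_SU2 (fun h => P h /\ Q h).
Proof.
move=> [dP dP0 nearP] [dQ dQ0 nearQ].
have cmp := real_comparable (gtr0_real dP0) (gtr0_real dQ0).
exists (Num.min dP dQ) => [|h SU2h close]; first by rewrite comparable_lt_min // dP0.
have close_le delta : Num.min dP dQ <= delta -> mx_close h g delta.
  by move=> le_delta i j; apply: lt_le_trans (close i j) le_delta.
by split; [apply: nearP | apply: nearQ]; rewrite //; apply: close_le;
  rewrite comparable_ge_min // lexx ?orbT.
Qed.

Lemma near_SU2_forall (I : finType) (P : I -> 'M[C]_2 -> Prop) :
  (forall i, near_SU2 (P i)) -> near_SU2 (fun h => forall i, P i h).
Proof.
move=> nearP.
suff /(_ (enum I)) : forall r : seq I, near_SU2 (fun h => forall i, i \in r -> P i h).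
  by apply: near_SU2_mono => h Ph i; apply: Ph; rewrite mem_enum.
elim=> [|i r IHr]; first by exists 1 => // h _ _ i.
apply: near_SU2_mono (near_SU2_and (nearP i) IHr) => h [Pi Pr] i'.
by rewrite inE => /predU1P [->|]; [apply: Pi | apply: Pr].
Qed.

Definition cont_SU2 f := forall e : C, 0 < e -> near_SU2 (fun h => `|f h - f g| < e).

Lemma eq_cont_SU2 f f' : (forall h, f h = f' h) -> cont_SU2 f -> cont_SU2 f'.
Proof. by move=> ff' cf e e0; apply: near_SU2_mono (cf e e0) => h; rewrite !ff'. Qed.

Lemma cont_SU2_cst c : cont_SU2 (fun=> c).
Proof. by move=> e e0; exists 1 => // h _ _; rewrite subrr normr0. Qed.

Lemma cont_SU2D f1 f2 : cont_SU2 f1 -> cont_SU2 f2 -> cont_SU2 (fun h => f1 h + f2 h).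
Proof.
move=> c1 c2 e e0; have e20 : 0 < e / 2 by rewrite divr_gt0.
apply: near_SU2_mono (near_SU2_and (c1 _ e20) (c2 _ e20)) => h [lt1 lt2].
have -> : f1 h + f2 h - (f1 g + f2 g) = (f1 h - f1 g) + (f2 h - f2 g) by ring.
by rewrite (splitr e); apply: le_lt_trans (ler_normD _ _) (ltrD lt1 lt2).
Qed.

Lemma cont_SU2M f1 f2 : cont_SU2 f1 -> cont_SU2 f2 -> cont_SU2 (fun h => f1 h * f2 h).
Proof.
move=> c1 c2 e e0; set a := f1 g; set b := f2 g; set K := 1 + `|a| + `|b|.
have K0 : 0 < K by rewrite /K -addrA ltr_pwDl // addr_ge0.
have eK0 : 0 < e / K by rewrite divr_gt0.
have cmp := real_comparable (gtr0_real (@ltr01 C)) (gtr0_real eK0).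
pose eps := Num.min 1 (e / K).
have eps0 : 0 < eps by rewrite comparable_lt_min // ltr01.
have eps1 : eps <= 1 by rewrite comparable_ge_min // lexx.
have epsK : eps * K <= e.
  rewrite -[leRHS](divfK (lt0r_neq0 K0)); apply: ler_wpM2r; first exact: ltW.
  by rewrite /eps comparable_ge_min // lexx orbT.
apply: near_SU2_mono (near_SU2_and (c1 _ eps0) (c2 _ eps0)) => h [ltA ltB].
set A := f1 h - a in ltA *; set B := f2 h - b in ltB *.
have -> : f1 h * f2 h - a * b = B * A + (a * B + A * b) by rewrite /A /B; ring.
apply: le_lt_trans (ler_normD _ _) (lt_le_trans _ epsK).
have -> : eps * K = eps + (`|a| * eps + eps * `|b|) by rewrite /K; ring.
rewrite normrM; apply: ltr_leD.
  by apply: le_lt_trans ltA; rewrite ler_piMl // (le_trans (ltW ltB)).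
apply: le_trans (ler_normD _ _) _; rewrite !normrM.
by rewrite lerD // ?ler_wpM2l ?ler_wpM2r // ltW.
Qed.

Lemma cont_SU2_sum (I : Type) (r : seq I) (F : I -> 'M[C]_2 -> C) :
  (forall i, cont_SU2 (F i)) -> cont_SU2 (fun h => \sum_(i <- r) F i h).
Proof.
move=> cF; elim: r => [|i r IHr].
  by apply: eq_cont_SU2 (cont_SU2_cst 0) => h; rewrite big_nil.
by apply: eq_cont_SU2 (cont_SU2D (cF i) IHr) => h; rewrite big_cons.
Qed.

Lemma cont_SU2_prod (I : Type) (r : seq I) (F : I -> 'M[C]_2 -> C) :
  (forall i, cont_SU2 (F i)) -> cont_SU2 (fun h => \prod_(i <- r) F i h).
Proof.
move=> cF; elim: r => [|i r IHr].
  by apply: eq_cont_SU2 (cont_SU2_cst 1) => h; rewrite big_nil.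
by apply: eq_cont_SU2 (cont_SU2M (cF i) IHr) => h; rewrite big_cons.
Qed.

End Continuity.

Section StrongContinuity.
Variables (R : realType) (d : nat) (tau : 'M[R[i]]_2 -> 'M[R[i]]_d).
Hypothesis tau_cont : strongly_continuous tau.

Lemma cont_SU2_tau g a b : SU2 g -> cont_SU2 g (fun h => tau h a b).
Proof.
have col_b (M : 'M[R[i]]_d) : (M *m \col_i (i == b)%:R) a 0 = M a b.
  rewrite mxE (bigD1 b) //= mxE eqxx mulr1 big1 ?addr0 // => i /negbTE neq_ib.
  by rewrite mxE neq_ib mulr0.
move=> SU2g e e0; have [delta delta0 close] := tau_cont (\col_i (i == b)%:R) SU2g e0.
by exists delta => // h SU2h /(close h SU2h)/(_ a 0); rewrite !col_b.
Qed.

Lemma tpow_cont m g (x : Hpow R d m) : SU2 g ->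
  forall e : R[i], 0 < e ->
    near_SU2 g (fun h => forall t, `|tpow tau h x t - tpow tau g x t| < e).
Proof.
move=> SU2g e e0; apply: near_SU2_forall => t.
suff : cont_SU2 g (fun h => tpow tau h x t) by apply.
apply: (@eq_cont_SU2 _ _ (fun h => \sum_s tpow_coef tau h t s * x s)) => [h|].
  by rewrite tpowE.
apply: cont_SU2_sum => s; apply: cont_SU2M (cont_SU2_cst _ _).
by apply: cont_SU2_prod => i; apply: cont_SU2_tau.
Qed.

End StrongContinuity.

Unset Implicit Arguments.

Theorem proposition2p3 (R : realType) (d : nat)
    (tau : 'M[R[i]]_2 -> 'M[R[i]]_d)
    (Hrep : unitary_rep tau) (Hcont : strongly_continuous tau) :
  (* E_0 = C (the whole one-dimensional H^{(x)0}) *)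
  (forall x : Hpow R d 0, Esp 0 tau x) /\
  (* each E_m is invariant under tau^{(x)m} ... *)
  (forall m g (x : Hpow R d m), SU2 g -> Esp m tau x -> Esp m tau (tpow tau g x)) /\
  (* ... and the restriction is a unitary representation: isometric, *)
  (forall m g (x y : Hpow R d m), SU2 g -> Esp m tau x -> Esp m tau y ->
     dotv (tpow tau g x) (tpow tau g y) = dotv x y) /\
  (* onto, *)
  (forall m g (y : Hpow R d m), SU2 g -> Esp m tau y ->
     exists2 x, Esp m tau x & tpow tau g x = y) /\
  (* multiplicative, unital, *)
  (forall m g h (x : Hpow R d m), SU2 g -> SU2 h -> Esp m tau x ->
     tpow tau (g *m h) x = tpow tau g (tpow tau h x)) /\
  (forall m (x : Hpow R d m), Esp m tau x -> tpow tau 1%:M x = x) /\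
  (* trivial on E_0, *)
  (forall g (x : Hpow R d 0), SU2 g -> Esp 0 tau x -> tpow tau g x = x) /\
  (* strongly continuous *)
  (forall m (x : Hpow R d m), Esp m tau x -> forall g, SU2 g ->
     forall e : R[i], 0 < e -> exists2 delta : R[i], 0 < delta &
       forall h, SU2 h -> mx_close h g delta ->
         forall t, `|tpow tau h x t - tpow tau g x t| < e) /\
  (* iota_{k,m} maps E_{k+m} into E_k (x) E_m, *)
  (forall k m (x : Hpow R d (k + m)), Esp (k + m) tau x ->
     tensS (Esp k tau) (Esp m tau) (iotaE k m x)) /\
  (* is an isometry on E_{k+m}, *)
  (forall k m (x y : Hpow R d (k + m)), Esp (k + m) tau x -> Esp (k + m) tau y ->
     dotv (iotaE k m x) (iotaE k m y) = dotv x y) /\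
  (* is equivariant for the diagonal actions, *)
  (forall k m g (x : Hpow R d (k + m)), SU2 g -> Esp (k + m) tau x ->
     iotaE k m (tpow tau g x) = tensop (tpow tau g) (tpow tau g) (iotaE k m x)) /\
  (* iota_{0,m} and iota_{m,0} are the canonical identifications, *)
  (forall m (x : Hpow R d (0 + m)), Esp (0 + m) tau x ->
     forall t0 (t : m.-tuple 'I_d), iotaE 0 m x (t0, t) = x t) /\
  (forall m (x : Hpow R d (m + 0)), Esp (m + 0) tau x ->
     forall (t : m.-tuple 'I_d) t0,
       iotaE m 0 x (t, t0) = x (tcast (esym (addn0 m)) t)) /\
  (* and (1 (x) iota_{l,m}) iota_{k,l+m} = (iota_{k,l} (x) 1) iota_{k+l,m}
     (modulo the associativity identifications of tensor products) *)
  (forall k l m (x : Hpow R d (k + (l + m))), Esp (k + (l + m)) tau x ->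
     forall (t1 : k.-tuple 'I_d) (t2 : l.-tuple 'I_d) (t3 : m.-tuple 'I_d),
       idt (iotaE l m) (iotaE k (l + m) x) (t1, (t2, t3)) =
       tid (iotaE k l) (iotaE (k + l) m (castA x)) ((t1, t2), t3)).
Proof.
split; first by move=> x; apply: orthc_span => y [[]].
split; first by move=> m g x SU2g; apply: Esp_tpow.
split; first by move=> m g x y SU2g _ _; apply: tpow_iso.
split.
  move=> m g y SU2g Ey; have [SU2g' _] := SU2_adj SU2g.
  exists (tpow tau (adjmx g) y); first exact: Esp_tpow.
  by rewrite -tpow_mul // SU2g.1 tpow1.
split; first by move=> m g h x SU2g SU2h _; apply: tpow_mul.
split; first by move=> m x _; apply: tpow1.
split; first by move=> g x _ _; apply: tpow0.
split; first by move=> m x _ g SU2g; apply: tpow_cont.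
split; first by move=> k m x; apply: iotaE_Esp.
split; first by move=> k m x y _ _; apply: iotaE_iso.
split; first by move=> k m g x _ _; apply: iotaE_tpow.
split; first by move=> m x _; apply: iotaE0m.
split; first by move=> m x _; apply: iotaEm0.
by move=> k l m x _; apply: iotaE_assoc.
Qed.
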